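(* The MPB rule $M$ satisfies: (a) splitting monotonicity: for every instance $I$ and every $p\in W_M(I)$, if $I'$ is obtained from $I$ by replacing $p$ with a set $P'$ of new projects with $c(P')=c(p)$ and replacing every $A_i$ containing $p$ by $(A_i\setminus\{p\})\cup P'$, then $W_M(I')\cap P'\ne\emptyset$; (b) merging monotonicity: for every instance $I$, every $S\in M(I)$ and every $P'\subseteq S$ with $A_i\cap P'\in\{P',\emptyset\}$ for every voter $i$, if $I'$ is obtained from $I$ by merging the projects of $P'$ into a single new project $p$ with cost $c(P')$ and replacing every $A_i$ containing $P'$ by $(A_i\setminus P')\cup\{p\}$, then $p\in W_M(I')$; (c) weak exhaustiveness: for every instance $I$, every $S\in M(I)$ and every $p\in P\setminus S$ with $c(S)+c(p)\le b$, we have $S\cup\{p\}\in M(I)$.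
   Context: A PB instance is $I=\langle N,P,c,b,\mathcal{A}\rangle$ with voters $N=\{1,\dots,n\}$, projects $P$, costs $c:P\to\mathbb{N}$, budget $b\in\mathbb{N}$, and approval sets $A_i\subseteq P$. $c(S)=\sum_{p\in S}c(p)$; $S$ is feasible if $c(S)\le b$; $u_i(S)=c(S\cap A_i)$. A PB rule $R$ maps each instance to a set $R(I)$ of feasible subsets of $P$. The MPB rule $M$ outputs $M(I)$, the set of all feasible $S$ maximizing $\min_{i\in N}u_i(S)$ among feasible sets. For a rule $R$, $W_R(I)=\{p\in P:\exists S\in R(I),\ p\in S\}$ is the set of winning projects. *)

From mathcomp Require Import all_boot.
Set Implicit Arguments. Unset Strict Implicit. Unset Printing Implicit Defensive.

(* A PB instance with voters 'I_n (N = {1..n}) and project set = the whole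
   finite type P. *)
Record instance (n : nat) (P : finType) := Instance {
  cost : P -> nat;
  budget : nat;
  appr : 'I_n -> {set P} }.

Section PB.
Variables (n : nat) (P : finType) (I : instance n P).

Definition cost_set (S : {set P}) : nat := \sum_(x in S) cost I x.

Definition feasible (S : {set P}) : Prop := cost_set S <= budget I.

Definition util (i : 'I_n) (S : {set P}) : nat := cost_set (S :&: appr I i).

(* min_i u_i(S) >= min_i u_i(T), unfolded so that it is meaningful also for
   n = 0 (empty minimum = +infinity, all sets tie). *)
Definition min_util_ge (S T : {set P}) : Prop :=
  forall k, (forall i, k <= util i T) -> (forall i, k <= util i S).

Definition mpb (S : {set P}) : Prop :=
  feasible S /\ forall T, feasible T -> min_util_ge S T.

Definition winning (p : P) : Prop := exists S, mpb S /\ p \in S.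
End PB.

(* J (projects Q) is obtained from I (projects P) by splitting p into the
   set P' of new projects: emb identifies P \ {p} with Q \ P'. *)
Definition is_split (n : nat) (P Q : finType) (I : instance n P) (p : P)
    (J : instance n Q) (emb : P -> Q) (P' : {set Q}) : Prop :=
  (forall x y, x != p -> y != p -> emb x = emb y -> x = y) /\
      (forall x, x != p -> emb x \notin P') /\
      (forall q, q \notin P' -> exists x, x != p /\ emb x = q) /\
      (forall x, x != p -> cost J (emb x) = cost I x) /\
      cost_set J P' = cost I p /\
      budget J = budget I /\
      (forall i, appr J i =
         emb @: (appr I i :\ p) :|: (if p \in appr I i then P' else set0)).

(* J (projects Q) is obtained from I (projects P) by merging P' into the
   single new project p: emb identifies P \ P' with Q \ {p}. *)
Definition is_merge (n : nat) (P Q : finType) (I : instance n P) (P' : {set P})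
    (J : instance n Q) (emb : P -> Q) (p : Q) : Prop :=
  (forall x y, x \notin P' -> y \notin P' -> emb x = emb y -> x = y) /\
      (forall x, x \notin P' -> emb x != p) /\
      (forall q, q != p -> exists x, x \notin P' /\ emb x = q) /\
      (forall x, x \notin P' -> cost J (emb x) = cost I x) /\
      cost J p = cost_set I P' /\
      budget J = budget I /\
      (forall i, appr J i =
         emb @: (appr I i :\: P') :|: (if P' \subset appr I i then [set p] else set0)).

From mathcomp Require Import all_boot.
Set Implicit Arguments.
Unset Strict Implicit. Unset Printing Implicit Defensive.

(* MPB sees an instance only through the costs and utility profiles of its
   feasible sets.  Splitting p into P' (or merging P' into p) relabels the
   projects outside these blocks; a feasible set of I containing p (resp. P')
   lifts to a feasible set of J containing P' (resp. p) with the same cost and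
   utilities, and an optimal set T of J lowers to a feasible set of I with the
   same utilities -- for merging always (P' is approved all-or-none), for
   splitting as soon as T avoids P'.  So either T already meets P', or the
   lifted optimum of I is optimal in J.  Weak exhaustiveness holds because
   utilities grow with the set. *)

Section Instance.
Variables (n : nat) (P : finType) (I : instance n P).
Implicit Types (X Y S T D : {set P}) (x p : P).

Lemma cost_set0 : cost_set I set0 = 0.
Proof. by rewrite /cost_set big_set0. Qed.

Lemma cost_set1 x : cost_set I [set x] = cost I x.
Proof. by rewrite /cost_set big_set1. Qed.

Lemma cost_setI1 X x :
  cost_set I (X :&: [set x]) = if x \in X then cost I x else 0.
Proof.
case: ifPn => xX; first by rewrite (setIidPr _) ?sub1set // cost_set1.
suff -> : X :&: [set x] = set0 by rewrite cost_set0.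
apply/setP => y; rewrite !inE.
by case: eqP => [->|]; rewrite ?(negbTE xX) ?andbF.
Qed.

Lemma cost_setID X D :
  cost_set I X = cost_set I (X :&: D) + cost_set I (X :\: D).
Proof. exact: big_setID. Qed.

Lemma cost_set_subset X Y : X \subset Y -> cost_set I X <= cost_set I Y.
Proof. by move=> sXY; rewrite (cost_setID Y X) (setIidPr sXY) leq_addr. Qed.

Lemma util_subset i X Y : X \subset Y -> util I i X <= util I i Y.
Proof. by move=> sXY; apply/cost_set_subset/setSI. Qed.

Lemma mpb_exists : exists S, mpb I S.
Proof.
have feas0 : feasible I set0 by rewrite /feasible cost_set0.
have [i0 _ | no_voter] := pickP (@predT 'I_n); last first.
  by exists set0; split=> // T _ k _ i; have := no_voter i.
pose least_util T := util I [arg min_(i < i0) util I i T] T.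
have least_utilP T i : least_util T <= util I i T.
  by rewrite /least_util; case: arg_minnP => // j _; apply.
have [S feasS S_max] :=
  @arg_maxnP _ set0 (fun T => cost_set I T <= budget I) least_util feas0.
exists S; split=> // T feasT k lek i.
exact: leq_trans (leq_trans (lek _) (S_max T feasT)) (least_utilP S i).
Qed.

Lemma mpb_setU1 S p : mpb I S -> p \notin S ->
  cost_set I S + cost I p <= budget I -> mpb I (p |: S).
Proof.
move=> [_ S_opt] pS le_budget; split.
  by rewrite /feasible /cost_set big_setU1 //= addnC.
move=> T feasT k lek i; apply: leq_trans (S_opt T feasT k lek i) _.
exact/util_subset/subsetUr.
Qed.

End Instance.

Lemma mpb_transfer n (P Q : finType) (I : instance n P) (J : instance n Q)
    S S' T T' :
  mpb I S -> mpb J T -> feasible J S' -> feasible I T' ->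
  (forall i, util I i S <= util J i S') ->
  (forall i, util J i T <= util I i T') ->
  mpb J S'.
Proof.
move=> [_ S_opt] [_ T_opt] feasS' feasT' leS leT; split=> // U feasU k lek i.
apply: leq_trans (leS i); apply: (S_opt T' feasT') => j.
exact: leq_trans (T_opt U feasU k lek j) (leT j).
Qed.

Section Relabelling.
Variables (n : nat) (P Q : finType) (I : instance n P) (J : instance n Q).

Record relabelling (A : {set P}) (B : {set Q}) (emb : P -> Q)
    (blk : 'I_n -> {set Q}) : Prop := Relabelling {
  relabel_inj : {in ~: A &, injective emb};
  relabel_out : forall x, x \notin A -> emb x \notin B;
  relabel_onto : forall q, q \notin B -> exists2 x, x \notin A & emb x = q;
  relabel_cost : forall x, x \notin A -> cost J (emb x) = cost I x;
  relabel_appr : forall i, appr J i = emb @: (appr I i :\: A) :|: blk i;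
  relabel_blk : forall i, blk i \subset B }.

Variables (A : {set P}) (B : {set Q}) (emb : P -> Q) (blk : 'I_n -> {set Q}).
Hypothesis rl : relabelling A B emb blk.
Implicit Types (X D : {set P}) (Y C : {set Q}).

Definition emb_preim Y := [set x | x \notin A & emb x \in Y].

Definition lift_set X C := emb @: (X :\: A) :|: C.

Definition lower_set Y D := emb_preim Y :|: D.

Lemma emb_preimI Y1 Y2 : emb_preim (Y1 :&: Y2) = emb_preim Y1 :&: emb_preim Y2.
Proof. by apply/setP => x; rewrite !inE andbACA andbb. Qed.

Lemma emb_preim_lift X C : C \subset B -> emb_preim (lift_set X C) = X :\: A.
Proof.
move=> sCB; apply/setP => x; rewrite !inE; case: (boolP (x \in A)) => //= xA.
have -> : (emb x \in C) = false.
  exact/negbTE/(contra (subsetP sCB _))/(relabel_out rl xA).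
rewrite orbF; apply/imsetP/idP => [[y] | xX]; last first.
  by exists x; rewrite ?inE ?xA.
by rewrite !inE => /andP[yA yX] /(relabel_inj rl) ->; rewrite ?inE.
Qed.

Lemma lift_set_setIB X C : C \subset B -> lift_set X C :&: B = C.
Proof.
move=> sCB; rewrite setIUl (setIidPl sCB); apply/setUidPr.
apply/subsetP => _ /setIP[/imsetP[x /setDP[_ xA] ->] exB].
by have := relabel_out rl xA; rewrite exB.
Qed.

Lemma cost_emb_preim Y :
  cost_set J Y = cost_set I (emb_preim Y) + cost_set J (Y :&: B).
Proof.
rewrite (cost_setID J Y B) addnC; congr (_ + _).
have -> : Y :\: B = emb @: emb_preim Y.
  apply/setP => y; rewrite !inE; apply/andP/imsetP => [[yB yY] | [x]].
    by have [x xA exy] := relabel_onto rl yB; exists x; rewrite // inE xA exy.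
  by rewrite inE => /andP[xA xY] ->; rewrite (relabel_out rl xA).
rewrite /cost_set big_imset => [|x y]; last first.
  rewrite !inE => /andP[xA _] /andP[yA _].
  by apply: (relabel_inj rl); rewrite inE.
by apply: eq_bigr => x; rewrite inE => /andP[xA _]; rewrite (relabel_cost rl).
Qed.

Lemma util_emb_preim i Y :
  util J i Y = cost_set I (emb_preim Y :&: appr I i) + cost_set J (Y :&: blk i).
Proof.
have apprJ := relabel_appr rl i; have sblk := relabel_blk rl i.
rewrite /util cost_emb_preim emb_preimI apprJ emb_preim_lift //.
rewrite -setIA lift_set_setIB //.
by congr (cost_set _ _ + _); apply/setP => x; rewrite !inE; case: (x \in A).
Qed.

Lemma cost_lift_set X C : C \subset B -> cost_set J C = cost_set I (X :&: A) ->
  cost_set J (lift_set X C) = cost_set I X.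
Proof.
by move=> sCB eqC; rewrite cost_emb_preim emb_preim_lift ?lift_set_setIB // eqC
  [RHS](cost_setID I X A) addnC.
Qed.

Lemma util_lift_set i X C : C \subset B ->
  cost_set J (C :&: blk i) = cost_set I (X :&: appr I i :&: A) ->
  util J i (lift_set X C) = util I i X.
Proof.
move=> sCB eqC; rewrite util_emb_preim emb_preim_lift //.
have -> : lift_set X C :&: blk i = C :&: blk i.
  by rewrite -[in LHS](setIidPr (relabel_blk rl i)) setIA lift_set_setIB.
by rewrite eqC setIDAC /util [RHS](cost_setID I _ A) addnC.
Qed.

Lemma lower_set_setIA Y D : D \subset A -> lower_set Y D :&: A = D.
Proof.
move=> sDA; apply/setP => x; rewrite /lower_set !inE.
case: (boolP (x \in D)) => [/(subsetP sDA) -> | _]; rewrite ?orbT ?orbF //.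
by case: (x \in A); rewrite ?andbF.
Qed.

Lemma lower_set_setDA Y D : D \subset A -> lower_set Y D :\: A = emb_preim Y.
Proof.
move=> sDA; apply/setP => x; rewrite /lower_set !inE.
case: (boolP (x \in D)) => [/(subsetP sDA) -> | _]; rewrite ?orbT ?orbF //.
by case: (x \in A); rewrite ?andbF.
Qed.

Lemma cost_lower_set Y D : D \subset A -> cost_set I D = cost_set J (Y :&: B) ->
  cost_set I (lower_set Y D) = cost_set J Y.
Proof.
move=> sDA eqD; rewrite cost_emb_preim (cost_setID I _ A).
by rewrite lower_set_setIA // lower_set_setDA // eqD addnC.
Qed.

Lemma util_lower_set i Y D : D \subset A ->
  cost_set I (D :&: appr I i) = cost_set J (Y :&: blk i) ->
  util I i (lower_set Y D) = util J i Y.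
Proof.
move=> sDA eqD; rewrite util_emb_preim /util (cost_setID I _ A) addnC -eqD.
by rewrite -setIDAC lower_set_setDA // setIAC lower_set_setIA.
Qed.

End Relabelling.

Section Split.
Variables (n : nat) (P Q : finType) (I : instance n P) (p : P)
  (J : instance n Q) (emb : P -> Q) (P' : {set Q}).
Hypothesis splitJ : is_split I p J emb P'.

Definition split_block (i : 'I_n) : {set Q} :=
  if p \in appr I i then P' else set0.

Lemma split_relabelling : relabelling I J [set p] P' emb split_block.
Proof.
have [inj [out [onto [cost_emb [_ [_ apprJ]]]]]] := splitJ.
split=> [x y | x | q | x | i | i].
- by rewrite !inE; apply: inj.
- by rewrite inE; apply: out.
- by move/onto=> [x [xp <-]]; exists x; rewrite ?inE.
- by rewrite inE; apply: cost_emb.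
- exact: apprJ.
- by rewrite /split_block; case: ifP; rewrite ?sub0set.
Qed.

Lemma split_winning :
  winning I p -> P' != set0 -> exists q, q \in P' /\ winning J q.
Proof.
have rl := split_relabelling.
have [_ [_ [_ [_ [cost_P' [budgetJ _]]]]]] := splitJ.
move=> [S [S_opt pS]] /set0Pn[q qP'].
have [T T_opt] := mpb_exists J.
have [TP'0 | [r /setIP[rT rP']]] := set_0Vmem (T :&: P'); last first.
  by exists r; split; last by exists T.
exists q; split=> //; exists (lift_set [set p] emb S P'); split; last first.
  by rewrite inE qP' orbT.
have Sp : S :&: [set p] = [set p] by apply/setIidPr; rewrite sub1set.
have T_block i : T :&: split_block i = set0.
  by rewrite /split_block; case: ifP; rewrite ?TP'0 ?setI0.
pose T' := lower_set [set p] emb T set0.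
apply: (mpb_transfer S_opt T_opt (T' := T')) => [||i|i].
- rewrite /feasible (cost_lift_set rl) ?Sp ?cost_set1 // budgetJ.
  by case: S_opt.
- rewrite /feasible (cost_lower_set rl) ?sub0set //.
    by rewrite -budgetJ; case: T_opt.
  by rewrite TP'0 !cost_set0.
- rewrite (util_lift_set rl) // cost_setI1 !inE pS /split_block.
  by case: (p \in appr I i); rewrite ?setIid ?setI0 ?cost_set0 ?cost_P'.
- by rewrite (util_lower_set rl) ?sub0set // T_block set0I !cost_set0.
Qed.

End Split.

Section Merge.
Variables (n : nat) (P Q : finType) (I : instance n P) (P' : {set P})
  (J : instance n Q) (emb : P -> Q) (p : Q).
Hypothesis mergeJ : is_merge I P' J emb p.

Definition merge_block (i : 'I_n) : {set Q} :=
  if P' \subset appr I i then [set p] else set0.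

Lemma merge_relabelling : relabelling I J P' [set p] emb merge_block.
Proof.
have [inj [out [onto [cost_emb [_ [_ apprJ]]]]]] := mergeJ.
split=> [x y | x | q | x | i | i].
- by rewrite !inE; apply: inj.
- by rewrite inE; apply: out.
- by rewrite inE => /onto[x [xP' <-]]; exists x.
- exact: cost_emb.
- exact: apprJ.
- by rewrite /merge_block; case: ifP; rewrite ?sub0set.
Qed.

Lemma merge_winning S : mpb I S -> P' \subset S ->
  (forall i, appr I i :&: P' = P' \/ appr I i :&: P' = set0) -> winning J p.
Proof.
have rl := merge_relabelling.
have [_ [_ [_ [_ [cost_p [budgetJ _]]]]]] := mergeJ.
move=> S_opt sP'S all_or_none.
have cost_approved i :
    cost_set I (P' :&: appr I i) = if P' \subset appr I i then cost J p else 0.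
  rewrite setIC cost_p; case: ifP => [/setIidPr -> // | not_sub].
  by case: (all_or_none i) => [/setIidPr | ->]; rewrite ?not_sub ?cost_set0.
have [T T_opt] := mpb_exists J.
exists (lift_set P' emb S [set p]); split; last by rewrite !inE eqxx orbT.
pose D := if p \in T then P' else set0.
apply: (mpb_transfer S_opt T_opt (T' := lower_set P' emb T D)) => [||i|i].
- rewrite /feasible (cost_lift_set rl) ?cost_set1 ?(setIidPr sP'S) // budgetJ.
  by case: S_opt.
- rewrite /feasible (cost_lower_set rl) -?budgetJ; first by case: T_opt.
    by rewrite /D; case: ifP; rewrite ?sub0set.
  by rewrite cost_setI1 cost_p /D; case: ifP; rewrite ?cost_set0.
- rewrite (util_lift_set rl) // setIAC (setIidPr sP'S) (cost_approved i).
  rewrite /merge_block; case: ifP => _;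
    by rewrite ?setIid ?setI0 ?cost_set1 ?cost_set0.
- rewrite (util_lower_set rl) // /D; first by case: ifP; rewrite ?sub0set.
  case: ifP => pT; rewrite ?cost_approved ?set0I ?cost_set0 /merge_block;
    by case: ifP; rewrite ?setI0 ?cost_setI1 ?pT ?cost_set0.
Qed.

End Merge.

Theorem theorem6 :
  (* (a) splitting monotonicity *)
  (forall (n : nat) (P Q : finType) (I : instance n P) (p : P)
          (J : instance n Q) (emb : P -> Q) (P' : {set Q}),
      winning I p -> P' != set0 -> is_split I p J emb P' ->
      exists q, q \in P' /\ winning J q) /\
  (* (b) merging monotonicity *)
  (forall (n : nat) (P Q : finType) (I : instance n P) (S P' : {set P})
          (J : instance n Q) (emb : P -> Q) (p : Q),
      mpb I S -> P' \subset S ->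
      (forall i, appr I i :&: P' = P' \/ appr I i :&: P' = set0) ->
      is_merge I P' J emb p ->
      winning J p) /\
  (* (c) weak exhaustiveness *)
  (forall (n : nat) (P : finType) (I : instance n P) (S : {set P}) (p : P),
      mpb I S -> p \notin S -> cost_set I S + cost I p <= budget I ->
      mpb I (p |: S)).
Proof.
split; [|split].
- move=> n P Q I p J emb P' p_wins nzP' splitJ.
  exact: (split_winning splitJ p_wins nzP').
- move=> n P Q I S P' J emb p S_opt sP'S all_or_none mergeJ.
  exact: (merge_winning mergeJ S_opt sP'S all_or_none).
- exact: mpb_setU1.
Qed.
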